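(* Let $P$ be a program, $F$ a set of facts, and let $\mathcal{ES}$ be the set of all embedding programs for $P\cup F$. Then $AS(P\cup F)=AS\big(\bigcap_{E\in\mathcal{ES}}E\big)$.
   Context: A program is a finite set of rules of the form $\alpha_1 \mid \dots \mid \alpha_k \;\texttt{:-}\; \beta_1,\dots,\beta_n, \mathit{not}\ \beta_{n+1},\dots,\mathit{not}\ \beta_m$ ($k,n,m\ge 0$), with $H(r)=\{\alpha_1,\dots,\alpha_k\}$, $B^+(r)=\{\beta_1,\dots,\beta_n\}$, $B^-(r)=\{\mathit{not}\ \beta_{n+1},\dots,\mathit{not}\ \beta_m\}$, $B(r)=B^+(r)\cup B^-(r)$. Programs are safe and contain no facts; facts are given as a set $F$ of ground atoms, each regarded as a ground rule with a single head atom and empty body; constants come from a fixed finite Herbrand universe. $\mathrm{grnd}(P)$ is the set of all ground instances of rules of $P$. For a ground program $G$ and a set of ground atoms $A$, the FLP reduct is $G^A=\{r\in G : A\models B(r)\}$; $A$ is an answer set of $G$ if $A$ is a subset-minimal model of $G^A$. $AS(G)$ is the set of answer sets of $G$, and $AS(P\cup F)$ denotes $AS(\mathrm{grnd}(P)\cup F)$. Embeddings: for a set of ground rules $R\subseteq \mathrm{grnd}(P)\cup F$ and a rule $r\in \mathrm{grnd}(P)\cup F$: $R\vdash_b r$ iff for every $a\in B^+(r)$ there is $r'\in R$ with $a\in H(r')$; $R\vdash_h r$ iff $r\in R$; $R\vdash r$ iff either $R\nvdash_b r$ or $R\vdash_h r$. A set $E\subseteq \mathrm{grnd}(P)\cup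 F$ is an embedding program for $P\cup F$ if $E\vdash r$ for every $r\in \mathrm{grnd}(P)\cup F$. *)

From Stdlib Require Import List.
Import ListNotations.
Set Implicit Arguments.

Section Syntax.
Variables (Pred Const Var : Type).

Inductive term : Type := TVar (v : Var) | TConst (c : Const).
Definition atom : Type := (Pred * list term)%type.
Definition gatom : Type := (Pred * list Const)%type.

(* a rule  a1 | ... | ak :- b1,...,bn, not b_{n+1},...,not b_m  *)
Record rule_of (A : Type) : Type := Rule {
  head : list A;
  pos  : list A;
  neg  : list A
}.
Definition rule := rule_of atom.
Definition grule := rule_of gatom.

Definition map_rule (A B : Type) (f : A -> B) (r : rule_of A) : rule_of B :=
  Rule (map f (head r)) (map f (pos r)) (map f (neg r)).

Definition subst_term (s : Var -> Const) (t : term) : Const :=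
  match t with TVar v => s v | TConst c => c end.
Definition subst_atom (s : Var -> Const) (a : atom) : gatom :=
  (fst a, map (subst_term s) (snd a)).

Definition var_in_atom (v : Var) (a : atom) : Prop := In (TVar v) (snd a).
Definition var_in_rule (v : Var) (r : rule) : Prop :=
  exists a, (In a (head r) \/ In a (pos r) \/ In a (neg r)) /\ var_in_atom v a.

Definition safe (r : rule) : Prop :=
  forall v, var_in_rule v r -> exists a, In a (pos r) /\ var_in_atom v a.

Definition is_fact (A : Type) (r : rule_of A) : Prop :=
  (exists a, head r = [a]) /\ pos r = [] /\ neg r = [].

Definition program := list rule.
Definition safe_program (P : program) : Prop := forall r, In r P -> safe r.
Definition no_facts (P : program) : Prop := forall r, In r P -> ~ is_fact r.

Definition atoms := gatom -> Prop.
Definition gprog := grule -> Prop.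

Definition grnd (P : program) : gprog :=
  fun g => exists r s, In r P /\ g = map_rule (subst_atom s) r.

Definition fact_rule (a : gatom) : grule := Rule [a] [] [].

Definition grnd_with_facts (P : program) (F : atoms) : gprog :=
  fun g => grnd P g \/ exists a, F a /\ g = fact_rule a.

Definition sat_body (A : atoms) (r : grule) : Prop :=
  (forall b, In b (pos r) -> A b) /\ (forall b, In b (neg r) -> ~ A b).
Definition is_model (G : gprog) (M : atoms) : Prop :=
  forall r, G r -> sat_body M r -> exists h, In h (head r) /\ M h.
(* FLP reduct G^A *)
Definition reduct (G : gprog) (A : atoms) : gprog :=
  fun r => G r /\ sat_body A r.
Definition subset_atoms (A B : atoms) : Prop := forall a, A a -> B a.
Definition answer_set (G : gprog) (A : atoms) : Prop :=
  is_model (reduct G A) A /\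
  forall B, subset_atoms B A -> is_model (reduct G A) B -> subset_atoms A B.

Definition derives_b (R : gprog) (r : grule) : Prop :=
  forall a, In a (pos r) -> exists r', R r' /\ In a (head r').
Definition derives_h (R : gprog) (r : grule) : Prop := R r.
Definition derives (R : gprog) (r : grule) : Prop :=
  ~ derives_b R r \/ derives_h R r.

Definition embedding_program (P : program) (F : atoms) (E : gprog) : Prop :=
  (forall r, E r -> grnd_with_facts P F r) /\
  (forall r, grnd_with_facts P F r -> derives E r).

Definition inter_embeddings (P : program) (F : atoms) : gprog :=
  fun r => forall E, embedding_program P F E -> E r.

End Syntax.

(* The argument is a splitting property of ground programs.  Let G be a ground
   program and I a subprogram of G that is closed under body support: every rule
   of G whose positive body atoms all occur in heads of rules of I already
   belongs to I.  Then
   - every answer set of a subprogram of G consists only of atoms occurring in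
     heads of I (minimality forbids unsupported atoms), and
   - for an interpretation A made of such atoms, the reducts G^A and I^A have
     the same models below A, because a rule of G^A that fires in such a model
     has its positive body among the heads of I and hence lies in I.
   Together these give AS(G) = AS(I).  The theorem follows by instantiating G
   with grnd(P) ∪ F and I with the intersection of all embedding programs:
   grnd(P) ∪ F is itself an embedding program, so the intersection is a
   subprogram of it, and the defining property of embeddings makes the
   intersection closed under body support. *)

From Pilot Require Import Defs.
From Stdlib Require Import List.

Section Splitting.
Variables (Pred Const : Type).
Variables (G I : gprog Pred Const).

Hypothesis I_sub : forall r, I r -> G r.
Hypothesis I_closed : forall r, G r -> derives_b I r -> I r.

Definition head_atoms : atoms Pred Const :=
  fun a => exists r, I r /\ In a (Defs.head r).

(* Answer sets of subprograms of G contain only head atoms of I: intersecting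
   an answer set A with [head_atoms] still yields a model of the reduct, so by
   minimality nothing is lost. *)
Lemma answer_set_in_head_atoms (H : gprog Pred Const) {A : atoms Pred Const} :
  (forall r, H r -> G r) -> answer_set H A -> subset_atoms A head_atoms.
Proof.
  intros H_sub [A_model A_min].
  set (AS := fun a => A a /\ head_atoms a).
  assert (AS_model : is_model (reduct H A) AS).
  { intros r [Hr A_body] [AS_pos _].
    assert (Ir : I r).
    { apply I_closed; [now apply H_sub|].
      intros a Ha; exact (proj2 (AS_pos a Ha)). }
    destruct (A_model r (conj Hr A_body) A_body) as [h [Hh Ah]].
    exists h; split; [exact Hh|]; split; [exact Ah|]; now exists r. }
  intros a Aa.
  exact (proj2 (A_min AS (fun b Hb => proj1 Hb) AS_model a Aa)).
Qed.

Lemma reduct_models_agree {A B : atoms Pred Const} :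
  subset_atoms A head_atoms -> subset_atoms B A ->
  is_model (reduct G A) B <-> is_model (reduct I A) B.
Proof.
  intros A_heads B_sub; split.
  - intros B_model r [Ir A_body] B_body.
    exact (B_model r (conj (I_sub r Ir) A_body) B_body).
  - intros B_model r [Gr A_body] B_body.
    assert (Ir : I r).
    { apply I_closed; [exact Gr|].
      intros a Ha; exact (A_heads a (B_sub a (proj1 B_body a Ha))). }
    exact (B_model r (conj Ir A_body) B_body).
Qed.

Lemma answer_sets_agree (A : atoms Pred Const) :
  answer_set G A <-> answer_set I A.
Proof.
  assert (agree : subset_atoms A head_atoms ->
            answer_set G A <-> answer_set I A).
  { intros A_heads; unfold answer_set.
    rewrite (reduct_models_agree A_heads (fun a Aa => Aa)).
    split; intros [A_model A_min]; split; try exact A_model;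
      intros B B_sub B_model; apply (A_min B B_sub);
      now apply (reduct_models_agree A_heads B_sub). }
  split; intro HA.
  - apply agree; [exact (answer_set_in_head_atoms G (fun r Gr => Gr) HA)|exact HA].
  - apply agree; [exact (answer_set_in_head_atoms I I_sub HA)|exact HA].
Qed.

End Splitting.

Section Embeddings.
Variables (Pred Const Var : Type).
Variables (P : program Pred Const Var) (F : atoms Pred Const).

(* grnd(P) ∪ F is itself an embedding program, so the intersection of all
   embedding programs is a subprogram of it. *)
Lemma inter_embeddings_sub :
  forall r, inter_embeddings P F r -> grnd_with_facts P F r.
Proof.
  intros r Hr; apply Hr; split; [easy|].
  intros r' Hr'; right; exact Hr'.
Qed.

(* A rule of grnd(P) ∪ F whose positive body is derivable from the intersection
   is derivable, hence contained, in every embedding program. *)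
Lemma inter_embeddings_closed :
  forall r, grnd_with_facts P F r -> derives_b (inter_embeddings P F) r ->
    inter_embeddings P F r.
Proof.
  intros r Gr r_body E E_embedding.
  destruct (proj2 E_embedding r Gr) as [not_body | in_E]; [exfalso|exact in_E].
  apply not_body; intros a Ha.
  destruct (r_body a Ha) as [r' [Ir' Hhead]].
  exists r'; split; [exact (Ir' E E_embedding)|exact Hhead].
Qed.

End Embeddings.

Theorem mainTheorem6 (Pred Const Var : Type)
  (Hfin : exists l : list Const, forall c : Const, In c l)
  (P : program Pred Const Var) (F : atoms Pred Const)
  (Hsafe : safe_program P) (Hnofacts : no_facts P) :
  forall A : atoms Pred Const,
    answer_set (grnd_with_facts P F) A <-> answer_set (inter_embeddings P F) A.
Proof.
  apply answer_sets_agree.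
  - exact (@inter_embeddings_sub _ _ _ P F).
  - exact (@inter_embeddings_closed _ _ _ P F).
Qed.
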